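(* Let $M(C,\bar\xi,\pi)$ be a Myller configuration with Darboux frame $(\bar\xi,\bar\mu,\bar v)$ and invariants $G,K,T$, with $(T,K)\neq(0,0)$ everywhere. Then: (i) if $K\equiv0$, $C$ is a $\bar v$-helix iff $\sigma_v=\mp G/T$ is constant; (ii) if $G\equiv0$, $C$ is a $\bar v$-helix iff $\sigma_v=\mp\dfrac{T'K-TK'}{(T^2+K^2)^{3/2}}$ is constant; (iii) if $T\equiv0$, $C$ is a $\bar v$-helix iff $\sigma_v=\mp G/K$ is constant.
   Context: Let $C$ be a smooth curve in $E^3$ parametrized by arclength $s$; primes denote $d/ds$. A Myller configuration $M(C,\bar\xi,\pi)$ consists of a smooth unit vector field $\bar\xi$ along $C$ and a smooth oriented plane field $\pi$ with $\bar\xi\in\pi$; $\bar v$ is the unit normal of $\pi$, $\bar\mu=\bar v\times\bar\xi$, and $\bar\xi'=G\bar\mu+K\bar v$, $\bar\mu'=-G\bar\xi+T\bar v$, $\bar v'=-K\bar\xi-T\bar\mu$. $C$ is a $\bar v$-helix if $\langle\bar v,\bar d_v\rangle$ is constant along $C$ for some constant unit vector $\bar d_v$. *)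

From Stdlib Require Import Reals.
From Coquelicot Require Import Coquelicot.
Open Scope R_scope.

Definition vec3 : Type := (R * R * R)%type.
Definition vx (u : vec3) : R := fst (fst u).
Definition vy (u : vec3) : R := snd (fst u).
Definition vz (u : vec3) : R := snd u.
Definition mkv (x y z : R) : vec3 := (x, y, z).

Definition dot (u w : vec3) : R := vx u * vx w + vy u * vy w + vz u * vz w.
Definition cross (u w : vec3) : vec3 :=
  mkv (vy u * vz w - vz u * vy w)
      (vz u * vx w - vx u * vz w)
      (vx u * vy w - vy u * vx w).
Definition vadd (u w : vec3) : vec3 := mkv (vx u + vx w) (vy u + vy w) (vz u + vz w).
Definition vscal (c : R) (u : vec3) : vec3 := mkv (c * vx u) (c * vy u) (c * vz u).

Definition smooth_on (a b : R) (f : R -> R) : Prop :=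
  forall (n : nat) (x : R), a < x < b -> ex_derive_n f n x.

Definition vsmooth_on (a b : R) (F : R -> vec3) : Prop :=
  smooth_on a b (fun t => vx (F t)) /\ smooth_on a b (fun t => vy (F t)) /\
  smooth_on a b (fun t => vz (F t)).

Definition vderiv_on (a b : R) (F DF : R -> vec3) : Prop :=
  forall s, a < s < b ->
    is_derive (fun t => vx (F t)) s (vx (DF s)) /\
    is_derive (fun t => vy (F t)) s (vy (DF s)) /\
    is_derive (fun t => vz (F t)) s (vz (DF s)).

(* Myller configuration M(C, xi, pi) along a curve parametrized by arclength
   s in the open interval (a,b): xi is a smooth unit vector field, v is the
   smooth unit normal of the smooth oriented plane field pi (so <xi,v> = 0),
   mu = v x xi, and (G,K,T) are the invariants in the Darboux-type equations
     xi' = G mu + K v,  mu' = -G xi + T v,  v' = -K xi - T mu. *)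
Definition darboux_mu (xi v : R -> vec3) : R -> vec3 := fun s => cross (v s) (xi s).

Definition Myller_config (a b : R) (xi v : R -> vec3) (G K T : R -> R) : Prop :=
  a < b /\
  vsmooth_on a b xi /\ vsmooth_on a b v /\
  smooth_on a b G /\ smooth_on a b K /\ smooth_on a b T /\
  (forall s, a < s < b ->
     dot (xi s) (xi s) = 1 /\ dot (v s) (v s) = 1 /\ dot (xi s) (v s) = 0) /\
  vderiv_on a b xi (fun s => vadd (vscal (G s) (darboux_mu xi v s)) (vscal (K s) (v s))) /\
  vderiv_on a b (darboux_mu xi v)
            (fun s => vadd (vscal (- G s) (xi s)) (vscal (T s) (v s))) /\
  vderiv_on a b v
            (fun s => vadd (vscal (- K s) (xi s)) (vscal (- T s) (darboux_mu xi v s))).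

Definition v_helix (a b : R) (v : R -> vec3) : Prop :=
  exists d : vec3, dot d d = 1 /\
    exists c : R, forall s, a < s < b -> dot (v s) d = c.

Definition const_on (a b : R) (f : R -> R) : Prop :=
  exists c : R, forall s, a < s < b -> f s = c.

From Stdlib Require Import Reals Lra Psatz.
From Coquelicot Require Import Coquelicot.
Open Scope R_scope.

(* Write (K, T) = la (-be, al) with (al, be) a unit vector turning at the rate
   theta = al be' - be al'.  The coordinates p, q, r of a fixed vector d in the
   Darboux frame satisfy p' = G q + K r, q' = -G p + T r, r' = -K p - T q.  If
   r = c is constant then be p = al q, so d = w (al xi + be mu) + c v, and the
   system shows that w is constant and (G + theta) w = la c, whence
   (G + theta) / la = c / w.  Conversely, if (G + theta) / la = m is constant,
   then al xi + be mu + m v is a fixed vector whose inner product with v is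
   the constant m.  The three cases are the choices (al, be) = (-1, 0),
   (-T, K) / |(T, K)| and (0, 1). *)

Lemma is_derive_eq (f : R -> R) (s D D' : R) :
  is_derive f s D -> D = D' -> is_derive f s D'.
Proof. now intros H <-. Qed.

Lemma is_derive_Rplus (f g : R -> R) (s df dg : R) :
  is_derive f s df -> is_derive g s dg -> is_derive (fun t => f t + g t) s (df + dg).
Proof. exact (is_derive_plus f g s df dg). Qed.

Lemma is_derive_Rminus (f g : R -> R) (s df dg : R) :
  is_derive f s df -> is_derive g s dg -> is_derive (fun t => f t - g t) s (df - dg).
Proof. exact (is_derive_minus f g s df dg). Qed.

Lemma is_derive_Rmult (f g : R -> R) (s df dg : R) :
  is_derive f s df -> is_derive g s dg ->
  is_derive (fun t => f t * g t) s (df * g s + f s * dg).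
Proof. intros Hf Hg. exact (is_derive_mult f g s df dg Hf Hg Rmult_comm). Qed.

Lemma const_of_derive_zero (a b : R) (f : R -> R) :
  (forall s, a < s < b -> is_derive f s 0) ->
  forall s t, a < s < b -> a < t < b -> f s = f t.
Proof.
  intros Hf s t Hs Ht.
  assert (Hin : forall x, Rmin s t <= x <= Rmax s t -> a < x < b).
  { intros x [Hx1 Hx2]. split.
    - apply Rlt_le_trans with (Rmin s t); [apply Rmin_glb_lt|]; lra.
    - apply Rle_lt_trans with (Rmax s t); [|apply Rmax_lub_lt]; lra. }
  destruct (MVT_gen f s t (fun _ => 0)) as [c [_ Hc]].
  - intros x Hx. apply Hf, Hin. lra.
  - intros x Hx. apply continuity_pt_filterlim, (ex_derive_continuous f x).
    exists 0. apply Hf, Hin, Hx.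
  - lra.
Qed.

Lemma derive_zero_of_const (a b : R) (f : R -> R) (c s D : R) :
  (forall t, a < t < b -> f t = c) -> a < s < b -> is_derive f s D -> D = 0.
Proof.
  intros Hc Hs HD.
  assert (Hloc : is_derive (fun _ => c) s D).
  { apply (is_derive_ext_loc f); [|exact HD].
    apply (locally_interval _ s a b); simpl; try lra.
    intros y Hy1 Hy2. apply Hc. lra. }
  rewrite <- (is_derive_unique _ _ _ Hloc). apply Derive_const.
Qed.

Lemma const_on_ext (a b : R) (f g : R -> R) :
  (forall s, a < s < b -> f s = g s) -> (const_on a b f <-> const_on a b g).
Proof.
  intros Hfg. split; intros [c Hc]; exists c; intros s Hs.
  - rewrite <- (Hfg s Hs). auto.
  - rewrite (Hfg s Hs). auto.
Qed.

Lemma smooth_on_is_derive (a b : R) (f : R -> R) (s : R) :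
  smooth_on a b f -> a < s < b -> is_derive f s (Derive f s).
Proof. intros Hf Hs. apply Derive_correct, (Hf 1%nat s Hs). Qed.

Lemma Rpower_3_2 (x : R) : 0 < x -> Rpower x (3 / 2) = x * sqrt x.
Proof.
  intros Hx. replace (3 / 2) with (1 + / 2) by field.
  rewrite Rpower_plus, Rpower_1, Rpower_sqrt; auto.
Qed.

Lemma is_derive_div_sqrt (f P : R -> R) (s df dP : R) :
  is_derive f s df -> is_derive P s dP -> 0 < P s ->
  is_derive (fun t => f t / sqrt (P t)) s
    ((df * P s - f s * dP / 2) / (P s * sqrt (P s))).
Proof.
  intros Hf HP HPpos.
  assert (Hr0 : sqrt (P s) <> 0) by (apply Rgt_not_eq, sqrt_lt_R0, HPpos).
  apply is_derive_eq with (1 := is_derive_div _ _ _ _ _ Hf (is_derive_sqrt _ _ _ HP HPpos) Hr0).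
  pose proof (sqrt_sqrt (P s) (Rlt_le _ _ HPpos)) as Hr2.
  set (r := sqrt (P s)) in *. rewrite <- Hr2. field. exact Hr0.
Qed.

Lemma is_derive_sum_sq (f g : R -> R) (s df dg : R) :
  is_derive f s df -> is_derive g s dg ->
  is_derive (fun t => f t ^ 2 + g t ^ 2) s (2 * (f s * df + g s * dg)).
Proof.
  intros Hf Hg.
  apply is_derive_eq with (1 := is_derive_Rplus _ _ _ _ _ (is_derive_pow _ 2 _ _ Hf)
                                 (is_derive_pow _ 2 _ _ Hg)).
  simpl. ring.
Qed.

Lemma unit_coords (al be p q : R) : al ^ 2 + be ^ 2 = 1 ->
  p = al * (al * p + be * q) - be * (al * q - be * p) /\
  q = be * (al * p + be * q) + al * (al * q - be * p).
Proof.
  intros Hu. split.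
  - transitivity (p * (al ^ 2 + be ^ 2)); [rewrite Hu|]; ring.
  - transitivity (q * (al ^ 2 + be ^ 2)); [rewrite Hu|]; ring.
Qed.

Definition lincomb3 (al be ga : R) (x y z : vec3) : vec3 :=
  vadd (vadd (vscal al x) (vscal be y)) (vscal ga z).

Definition orthonormal3 (x y z : vec3) : Prop :=
  dot x x = 1 /\ dot y y = 1 /\ dot z z = 1 /\
  dot x y = 0 /\ dot x z = 0 /\ dot y z = 0.

Definition coord (F : R -> vec3) (d : vec3) (t : R) : R := dot (F t) d.

Ltac unfold_vec := unfold lincomb3, dot, cross, vadd, vscal, mkv, vx, vy, vz; simpl.

Lemma dot_comm (u w : vec3) : dot u w = dot w u.
Proof. unfold dot. ring. Qed.

Lemma dot_lincomb3_l (al be ga : R) (x y z w : vec3) :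
  dot (lincomb3 al be ga x y z) w = al * dot x w + be * dot y w + ga * dot z w.
Proof. unfold_vec. ring. Qed.

Lemma vec3_eq_of_dot (u w : vec3) : (forall e, dot u e = dot w e) -> u = w.
Proof.
  destruct u as [[u1 u2] u3], w as [[w1 w2] w3]. intros H.
  pose proof (H (mkv 1 0 0)). pose proof (H (mkv 0 1 0)). pose proof (H (mkv 0 0 1)).
  unfold dot, mkv, vx, vy, vz in *. simpl in *.
  f_equal; [f_equal|]; lra.
Qed.

Lemma cross_orthonormal (x v : vec3) :
  dot x x = 1 -> dot v v = 1 -> dot x v = 0 -> orthonormal3 x (cross v x) v.
Proof.
  intros Hx Hv Hxv.
  assert (Hmu : dot (cross v x) (cross v x) = dot v v * dot x x - dot x v ^ 2)
    by (destruct x as [[? ?] ?], v as [[? ?] ?]; unfold_vec; ring).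
  assert (Hxmu : dot x (cross v x) = 0)
    by (destruct x as [[? ?] ?], v as [[? ?] ?]; unfold_vec; ring).
  assert (Hmuv : dot (cross v x) v = 0)
    by (destruct x as [[? ?] ?], v as [[? ?] ?]; unfold_vec; ring).
  rewrite Hx, Hv, Hxv in Hmu.
  unfold orthonormal3. repeat split; auto. rewrite Hmu. ring.
Qed.

Lemma parseval_cross (x v d : vec3) :
  dot x x = 1 -> dot v v = 1 -> dot x v = 0 ->
  dot d d = dot x d ^ 2 + dot (cross v x) d ^ 2 + dot v d ^ 2.
Proof.
  intros Hx Hv Hxv.
  (* (v x x).d is the determinant of (v, x, d); its square is their Gram determinant *)
  assert (Hgram : dot (cross v x) d ^ 2 =
     dot v v * (dot x x * dot d d - dot x d ^ 2)
     - dot x v * (dot x v * dot d d - dot x d * dot v d)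
     + dot v d * (dot x v * dot x d - dot x x * dot v d))
    by (destruct x as [[? ?] ?], v as [[? ?] ?], d as [[? ?] ?]; unfold_vec; ring).
  rewrite Hgram, Hx, Hv, Hxv. ring.
Qed.

Lemma lincomb3_coords (al be ga : R) (x y z : vec3) :
  orthonormal3 x y z ->
  dot x (lincomb3 al be ga x y z) = al /\ dot y (lincomb3 al be ga x y z) = be /\
  dot z (lincomb3 al be ga x y z) = ga.
Proof.
  intros (Hx & Hy & Hz & Hxy & Hxz & Hyz).
  rewrite !(dot_comm _ (lincomb3 _ _ _ _ _ _)), !dot_lincomb3_l,
    (dot_comm y x), (dot_comm z x), (dot_comm z y), Hx, Hy, Hz, Hxy, Hxz, Hyz.
  repeat split; ring.
Qed.

Lemma v_helix_intro (a b : R) (v : R -> vec3) (D : vec3) (c : R) :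
  0 < dot D D -> (forall s, a < s < b -> dot (v s) D = c) -> v_helix a b v.
Proof.
  intros HD Hc.
  assert (Hn : sqrt (dot D D) * sqrt (dot D D) = dot D D) by (apply sqrt_sqrt; lra).
  assert (Hn0 : sqrt (dot D D) <> 0) by (apply Rgt_not_eq, sqrt_lt_R0, HD).
  set (n := sqrt (dot D D)) in *.
  exists (vscal (/ n) D). split.
  - transitivity (dot D D / (n * n)); [unfold_vec; field; exact Hn0|].
    rewrite Hn. field. lra.
  - exists (c / n). intros s Hs. rewrite <- (Hc s Hs). unfold_vec. field. exact Hn0.
Qed.

Lemma vderiv_on_coord (a b : R) (F DF : R -> vec3) (d : vec3) (s : R) :
  vderiv_on a b F DF -> a < s < b -> is_derive (coord F d) s (dot (DF s) d).
Proof.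
  intros HF Hs. destruct (HF s Hs) as (Hx & Hy & Hz).
  exact (is_derive_Rplus _ _ _ _ _ (is_derive_Rplus _ _ _ _ _
           (is_derive_scal_l _ _ _ (vx d) Hx) (is_derive_scal_l _ _ _ (vy d) Hy))
           (is_derive_scal_l _ _ _ (vz d) Hz)).
Qed.

Section Myller.

Variables (a b : R) (xi v : R -> vec3) (G K T : R -> R).
Hypothesis Hconf : Myller_config a b xi v G K T.

Local Notation mu := (darboux_mu xi v).

Lemma myller_orthonormal (s : R) : a < s < b -> orthonormal3 (xi s) (mu s) (v s).
Proof.
  intros Hs. pose proof Hconf as (_ & _ & _ & _ & _ & _ & Horth & _).
  destruct (Horth s Hs) as (Hx & Hv & Hxv). exact (cross_orthonormal _ _ Hx Hv Hxv).
Qed.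

Lemma myller_parseval (d : vec3) (s : R) : a < s < b ->
  dot d d = coord xi d s ^ 2 + coord mu d s ^ 2 + coord v d s ^ 2.
Proof.
  intros Hs. pose proof Hconf as (_ & _ & _ & _ & _ & _ & Horth & _).
  destruct (Horth s Hs) as (Hx & Hv & Hxv). exact (parseval_cross _ _ d Hx Hv Hxv).
Qed.

Lemma myller_coord_derive (d : vec3) (s : R) : a < s < b ->
  is_derive (coord xi d) s (G s * coord mu d s + K s * coord v d s) /\
  is_derive (coord mu d) s (- G s * coord xi d s + T s * coord v d s) /\
  is_derive (coord v d) s (- K s * coord xi d s - T s * coord mu d s).
Proof.
  intros Hs. pose proof Hconf as (_ & _ & _ & _ & _ & _ & _ & Dxi & Dmu & Dv).
  split; [|split]; (eapply is_derive_eq; [apply (vderiv_on_coord a b); eauto|]);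
    unfold coord; unfold_vec; ring.
Qed.

Section Lancret.

Variables al be la al' be' : R -> R.
Hypothesis Hal : forall s, a < s < b -> is_derive al s (al' s).
Hypothesis Hbe : forall s, a < s < b -> is_derive be s (be' s).
Hypothesis Hunit : forall s, a < s < b -> al s ^ 2 + be s ^ 2 = 1.
Hypothesis Hla : forall s, a < s < b -> la s <> 0.
Hypothesis HK : forall s, a < s < b -> K s = - la s * be s.
Hypothesis HT : forall s, a < s < b -> T s = la s * al s.

Lemma unit_rotation (s : R) : a < s < b ->
  al' s = - (al s * be' s - be s * al' s) * be s /\
  be' s = (al s * be' s - be s * al' s) * al s.
Proof.
  intros Hs.
  assert (Hperp : al s * al' s + be s * be' s = 0).
  { pose proof (derive_zero_of_const a b _ 1 s _ Hunit Hs
                  (is_derive_sum_sq _ _ _ _ _ (Hal s Hs) (Hbe s Hs))). lra. }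
  destruct (unit_coords _ _ (al' s) (be' s) (Hunit s Hs)) as [E1 E2].
  rewrite Hperp in E1, E2. split; lra.
Qed.

Section HelixAxis.

Variables (d : vec3) (c : R).
Hypothesis Hr : forall s, a < s < b -> coord v d s = c.

Lemma helix_axis_perp (s : R) : a < s < b ->
  al s * coord mu d s - be s * coord xi d s = 0.
Proof.
  intros Hs. destruct (myller_coord_derive d s Hs) as (_ & _ & Dr).
  pose proof (derive_zero_of_const a b _ c s _ Hr Hs Dr) as E.
  rewrite (HK s Hs), (HT s Hs) in E.
  apply (Rmult_eq_reg_l (- la s)); [|apply Ropp_neq_0_compat, Hla, Hs].
  rewrite Rmult_0_r, <- E. ring.
Qed.

Lemma helix_axis_tangential_const (s t : R) : a < s < b -> a < t < b ->
  al s * coord xi d s + be s * coord mu d s = al t * coord xi d t + be t * coord mu d t.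
Proof.
  apply (const_of_derive_zero a b (fun u => al u * coord xi d u + be u * coord mu d u)).
  intros u Hu. destruct (myller_coord_derive d u Hu) as (Dp & Dq & _).
  eapply is_derive_eq.
  { apply is_derive_Rplus; apply is_derive_Rmult; eauto. }
  destruct (unit_rotation u Hu) as [Eal Ebe].
  set (th := al u * be' u - be u * al' u) in *.
  rewrite Eal, Ebe, (Hr u Hu), (HK u Hu), (HT u Hu).
  transitivity ((th + G u) * (al u * coord mu d u - be u * coord xi d u)); [ring|].
  rewrite (helix_axis_perp u Hu). ring.
Qed.

Lemma helix_axis_invariant (s : R) : a < s < b ->
  (G s + (al s * be' s - be s * al' s)) * (al s * coord xi d s + be s * coord mu d s)
  = la s * c.
Proof.
  intros Hs. destruct (myller_coord_derive d s Hs) as (Dp & Dq & _).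
  pose proof (derive_zero_of_const a b _ 0 s _ helix_axis_perp Hs
    (is_derive_Rminus _ _ _ _ _ (is_derive_Rmult _ _ _ _ _ (Hal s Hs) Dq)
                                 (is_derive_Rmult _ _ _ _ _ (Hbe s Hs) Dp))) as E.
  destruct (unit_rotation s Hs) as [Eal Ebe].
  set (th := al s * be' s - be s * al' s) in *.
  rewrite Eal, Ebe, (Hr s Hs), (HK s Hs), (HT s Hs) in E.
  assert (E' : la s * c * (al s ^ 2 + be s ^ 2)
                - (G s + th) * (al s * coord xi d s + be s * coord mu d s) = 0)
    by (rewrite <- E; ring).
  rewrite (Hunit s Hs) in E'. lra.
Qed.

End HelixAxis.

Lemma helix_invariant_const :
  v_helix a b v -> const_on a b (fun s => (G s + (al s * be' s - be s * al' s)) / la s).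
Proof.
  intros (d & Hd & c & Hc).
  pose proof Hconf as (Hab & _).
  set (s0 := (a + b) / 2).
  assert (Hs0 : a < s0 < b) by (unfold s0; lra).
  set (w := al s0 * coord xi d s0 + be s0 * coord mu d s0).
  assert (Hw0 : w <> 0).
  { intros Ew.
    pose proof (helix_axis_invariant d c Hc s0 Hs0) as Einv. fold w in Einv.
    rewrite Ew, Rmult_0_r in Einv.
    destruct (unit_coords _ _ (coord xi d s0) (coord mu d s0) (Hunit s0 Hs0)) as [Ep Eq].
    fold w in Ep, Eq. rewrite Ew, (helix_axis_perp d c Hc s0 Hs0) in Ep, Eq.
    pose proof (myller_parseval d s0 Hs0) as Hpar.
    rewrite Ep, Eq, (Hc s0 Hs0 : coord v d s0 = c), Hd in Hpar.
    assert (Hc0 : c = 0).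
    { apply (Rmult_eq_reg_l (la s0)); [lra | apply Hla, Hs0]. }
    rewrite Hc0 in Hpar. lra. }
  exists (c / w). intros s Hs.
  pose proof (helix_axis_invariant d c Hc s Hs) as Einv.
  rewrite (helix_axis_tangential_const d c Hc s s0 Hs Hs0) in Einv. fold w in Einv.
  pose proof (Hla s Hs).
  field_simplify_eq; [|split; auto]. rewrite <- Einv. ring.
Qed.

Lemma lincomb3_frame_const (m : R) :
  (forall s, a < s < b -> m * la s = G s + (al s * be' s - be s * al' s)) ->
  forall s t, a < s < b -> a < t < b ->
  lincomb3 (al s) (be s) m (xi s) (mu s) (v s) = lincomb3 (al t) (be t) m (xi t) (mu t) (v t).
Proof.
  intros Hmla s t Hs Ht. apply vec3_eq_of_dot. intros e.
  rewrite !dot_lincomb3_l.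
  apply (const_of_derive_zero a b
           (fun u => al u * coord xi e u + be u * coord mu e u + m * coord v e u));
    [|exact Hs|exact Ht].
  intros u Hu. destruct (myller_coord_derive e u Hu) as (Dp & Dq & Dr).
  eapply is_derive_eq.
  { apply is_derive_Rplus; [apply is_derive_Rplus; apply is_derive_Rmult; eauto|].
    apply is_derive_scal, Dr. }
  destruct (unit_rotation u Hu) as [Eal Ebe].
  set (th := al u * be' u - be u * al' u) in *.
  rewrite Eal, Ebe, (HK u Hu), (HT u Hu).
  transitivity ((m * la u - (G u + th)) * (be u * coord xi e u - al u * coord mu e u)); [ring|].
  rewrite (Hmla u Hu). unfold th. ring.
Qed.

Lemma const_invariant_helix :
  const_on a b (fun s => (G s + (al s * be' s - be s * al' s)) / la s) -> v_helix a b v.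
Proof.
  intros [m Hm].
  pose proof Hconf as (Hab & _).
  set (s0 := (a + b) / 2).
  assert (Hs0 : a < s0 < b) by (unfold s0; lra).
  assert (Hmla : forall s, a < s < b -> m * la s = G s + (al s * be' s - be s * al' s)).
  { intros s Hs. rewrite <- (Hm s Hs). field. apply Hla, Hs. }
  destruct (lincomb3_coords (al s0) (be s0) m _ _ _ (myller_orthonormal s0 Hs0))
    as (Hcx & Hcmu & Hcv).
  set (D := lincomb3 (al s0) (be s0) m (xi s0) (mu s0) (v s0)) in *.
  apply (v_helix_intro a b v D m).
  - rewrite (myller_parseval D s0 Hs0). unfold coord.
    rewrite Hcx, Hcmu, Hcv, (Hunit s0 Hs0). nra.
  - intros s Hs. unfold D. rewrite <- (lincomb3_frame_const m Hmla s s0 Hs Hs0).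
    apply (lincomb3_coords (al s) (be s) m _ _ _ (myller_orthonormal s Hs)).
Qed.

Lemma v_helix_iff_const_invariant :
  v_helix a b v <-> const_on a b (fun s => (G s + (al s * be' s - be s * al' s)) / la s).
Proof. split; [exact helix_invariant_const | exact const_invariant_helix]. Qed.

End Lancret.

Lemma v_helix_iff_K0 :
  (forall s, a < s < b -> T s <> 0 \/ K s <> 0) ->
  (forall s, a < s < b -> K s = 0) ->
  v_helix a b v <-> const_on a b (fun s => - (G s / T s)).
Proof.
  intros Hnz HK0.
  assert (HT0 : forall s, a < s < b -> T s <> 0).
  { intros s Hs. destruct (Hnz s Hs) as [H | H]; [exact H | contradiction (H (HK0 s Hs))]. }
  etransitivity.
  - apply (v_helix_iff_const_invariant (fun _ => -1) (fun _ => 0) (fun s => - T s)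
             (fun _ => 0) (fun _ => 0)); intros s Hs; cbv beta.
    1, 2: exact (is_derive_const _ s).
    + ring.
    + apply Ropp_neq_0_compat, HT0, Hs.
    + rewrite (HK0 s Hs). ring.
    + ring.
  - apply const_on_ext. intros s Hs. field. apply HT0, Hs.
Qed.

Lemma v_helix_iff_T0 :
  (forall s, a < s < b -> T s <> 0 \/ K s <> 0) ->
  (forall s, a < s < b -> T s = 0) ->
  v_helix a b v <-> const_on a b (fun s => - (G s / K s)).
Proof.
  intros Hnz HT0.
  assert (HK0 : forall s, a < s < b -> K s <> 0).
  { intros s Hs. destruct (Hnz s Hs) as [H | H]; [contradiction (H (HT0 s Hs)) | exact H]. }
  etransitivity.
  - apply (v_helix_iff_const_invariant (fun _ => 0) (fun _ => 1) (fun s => - K s)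
             (fun _ => 0) (fun _ => 0)); intros s Hs; cbv beta.
    1, 2: exact (is_derive_const _ s).
    + ring.
    + apply Ropp_neq_0_compat, HK0, Hs.
    + ring.
    + rewrite (HT0 s Hs). ring.
  - apply const_on_ext. intros s Hs. field. apply HK0, Hs.
Qed.

Lemma v_helix_iff_G0 :
  (forall s, a < s < b -> T s <> 0 \/ K s <> 0) ->
  (forall s, a < s < b -> G s = 0) ->
  v_helix a b v <->
  const_on a b (fun s => - ((Derive T s * K s - T s * Derive K s)
                            / Rpower (T s ^ 2 + K s ^ 2) (3 / 2))).
Proof.
  intros Hnz HG0.
  pose proof Hconf as (_ & _ & _ & _ & HsK & HsT & _).
  set (P := fun t => T t ^ 2 + K t ^ 2).
  assert (HP : forall s, a < s < b -> 0 < P s).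
  { intros s Hs. unfold P. pose proof (pow2_ge_0 (T s)). pose proof (pow2_ge_0 (K s)).
    destruct (Hnz s Hs) as [Hn | Hn]; pose proof (pow2_gt_0 _ Hn); lra. }
  assert (Hr0 : forall s, a < s < b -> sqrt (P s) <> 0)
    by (intros s Hs; apply Rgt_not_eq, sqrt_lt_R0, HP, Hs).
  assert (HdP : forall s, a < s < b ->
            is_derive P s (2 * (T s * Derive T s + K s * Derive K s)))
    by (intros s Hs; apply is_derive_sum_sq; apply (smooth_on_is_derive a b); auto).
  etransitivity.
  - apply (v_helix_iff_const_invariant
      (fun t => - T t / sqrt (P t)) (fun t => K t / sqrt (P t)) (fun t => - sqrt (P t))
      (fun t => (- Derive T t * P t - - T t * (2 * (T t * Derive T t + K t * Derive K t)) / 2)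
                / (P t * sqrt (P t)))
      (fun t => (Derive K t * P t - K t * (2 * (T t * Derive T t + K t * Derive K t)) / 2)
                / (P t * sqrt (P t)))); intros s Hs; cbv beta.
    + apply (is_derive_div_sqrt (fun t => - T t)); [|apply HdP, Hs | apply HP, Hs].
      exact (is_derive_opp _ _ _ (smooth_on_is_derive a b T s HsT Hs)).
    + apply is_derive_div_sqrt; [|apply HdP, Hs | apply HP, Hs].
      exact (smooth_on_is_derive a b K s HsK Hs).
    + pose proof (sqrt_sqrt (P s) (Rlt_le _ _ (HP s Hs))) as Hr2.
      transitivity (P s / (sqrt (P s) * sqrt (P s))).
      * unfold P. field. exact (Hr0 s Hs).
      * rewrite Hr2. field. apply Rgt_not_eq, HP, Hs.
    + apply Ropp_neq_0_compat, Hr0, Hs.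
    + field. apply Hr0, Hs.
    + field. apply Hr0, Hs.
  - apply const_on_ext. intros s Hs. rewrite (HG0 s Hs).
    change (T s ^ 2 + K s ^ 2) with (P s). rewrite (Rpower_3_2 _ (HP s Hs)).
    pose proof (sqrt_sqrt (P s) (Rlt_le _ _ (HP s Hs))) as Hr2.
    pose proof (Hr0 s Hs) as Hrs.
    set (r := sqrt (P s)) in *. rewrite <- Hr2. field. exact Hrs.
Qed.

End Myller.

Theorem corollary26 (a b : R) (xi v : R -> vec3) (G K T : R -> R) :
  Myller_config a b xi v G K T ->
  (forall s, a < s < b -> T s <> 0 \/ K s <> 0) ->
  ((forall s, a < s < b -> K s = 0) ->
     (v_helix a b v <-> const_on a b (fun s => - (G s / T s)))) /\
  ((forall s, a < s < b -> G s = 0) ->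
     (v_helix a b v <->
      const_on a b (fun s => - ((Derive T s * K s - T s * Derive K s)
                                / Rpower (T s ^ 2 + K s ^ 2) (3 / 2))))) /\
  ((forall s, a < s < b -> T s = 0) ->
     (v_helix a b v <-> const_on a b (fun s => - (G s / K s)))).
Proof.
  intros Hconf Hnz. split; [|split].
  - exact (v_helix_iff_K0 a b xi v G K T Hconf Hnz).
  - exact (v_helix_iff_G0 a b xi v G K T Hconf Hnz).
  - exact (v_helix_iff_T0 a b xi v G K T Hconf Hnz).
Qed.
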